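(* Let $G$ be an Oliver group and $N\trianglelefteq G$ a normal subgroup such that $\operatorname{Ind}_N^G:\operatorname{RO}(N)\to\operatorname{RO}(G)$ is a monomorphism. Let $V$ be an $\mathbb{R}N$-module satisfying, with respect to the group $N$, the following three conditions: (i) (weak gap condition) $\dim V^P\ge 2\dim V^H$ for every subgroup $P\le N$ of prime power order and every subgroup $H$ with $P<H\le N$; (ii) $\dim V^P\ge 5$ for every subgroup $P\le N$ of prime power order, and $\dim V^H\ge 2$ for every pseudocyclic subgroup $H\le N$; (iii) every pseudocyclic subgroup of $N$ occurs as an isotropy subgroup of the action of $N$ on $V$. Then $W=\operatorname{Ind}_N^G(V)$ satisfies conditions (i)–(iii) as an $\mathbb{R}G$-module, with $N$ replaced by $G$ throughout.
   Context: An Oliver group is a finite group $G$ for which there is no chain of subgroups $P\trianglelefteq H\trianglelefteq G$ with $P$ and $G/H$ of prime power order and $H/P$ cyclic. A finite group $K$ is pseudocyclic if for some prime $p$ it contains a normal $p$-subgroup $P$ with $K/P$ cyclic. $\operatorname{RO}(K)$ is the real representation group. $V^H$ is the subspace fixed by $H$; an isotropy subgroup of an action is a stabilizer $\{g : gv=v\}$ of some vector $v$. *)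

From HB Require Import structures.
From mathcomp Require Import all_boot all_order all_algebra all_fingroup all_solvable.
From mathcomp Require Import mxrepresentation.
Set Implicit Arguments. Unset Strict Implicit. Unset Printing Implicit Defensive.
Import GRing.Theory Num.Theory.


Local Open Scope group_scope.
Section Defs.
Variables (R : rcfType) (gT : finGroupType).

(* P has prime power order (the trivial group included). *)
Definition prime_power_group (P : {group gT}) : Prop :=
  exists p, prime p /\ p.-group P.

Definition oliver_group (G : {group gT}) : Prop :=
  ~ exists (P H : {group gT}),
      [/\ P <| H, H <| G, prime_power_group P,
          (exists q, prime q /\ q.-group (G / H)) & cyclic (H / P)].

Definition pseudocyclic (K : {group gT}) : Prop :=
  exists p, prime p /\
    exists P : {group gT}, [&& P <| K, p.-group P & cyclic (K / P)].

Definition fixmx n (rho : gT -> 'M[R]_n) (H : {set gT}) : 'M[R]_n :=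
  (\bigcap_(x in H) kermx ((rho x - 1%:M)%R))%MS.

Definition fixdim n (rho : gT -> 'M[R]_n) (H : {set gT}) : nat :=
  \rank (fixmx rho H).

Definition isotropy (K : {set gT}) n (rho : gT -> 'M[R]_n) (H : {set gT}) :=
  exists v : 'rV[R]_n, H = [set g in K | (v *m rho g)%R == v].

Definition cond_i (K : {group gT}) n (rho : gT -> 'M[R]_n) : Prop :=
  forall P H : {group gT}, P \subset K -> prime_power_group P ->
    P \proper H -> H \subset K -> 2 * fixdim rho H <= fixdim rho P.

Definition cond_ii (K : {group gT}) n (rho : gT -> 'M[R]_n) : Prop :=
  (forall P : {group gT}, P \subset K -> prime_power_group P ->
     5 <= fixdim rho P) /\
  (forall H : {group gT}, H \subset K -> pseudocyclic H -> 2 <= fixdim rho H).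

Definition cond_iii (K : {group gT}) n (rho : gT -> 'M[R]_n) : Prop :=
  forall H : {group gT}, H \subset K -> pseudocyclic H -> isotropy K rho H.

(* Induced representation Ind_N^G: W = (+)_i V t_i, with t_i a right
   transversal of N in G (G = disjoint union of N t_i); the (i,j) block of
   Ind(g) is rho (t_i g t_j^-1) when this lies in N, and 0 otherwise. *)
Definition rtrans (G N : {group gT}) (i : nat) : gT :=
  nth 1%g (enum (transversal (rcosets N G) G)) i.

Definition ind_mx (G N : {group gT}) n (rho : gT -> 'M[R]_n) :
    gT -> 'M[R]_(\sum_(i < #|G : N|) n) :=
  fun g => (\mxblock_(i < #|G : N|, j < #|G : N|)
     (let h := (rtrans G N i * g * (rtrans G N j)^-1)%g in
      if h \in N then rho h else 0 : 'M[R]_n))%R.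

Definition rsim (K : {set gT}) n1 (r1 : gT -> 'M[R]_n1) n2 (r2 : gT -> 'M[R]_n2) :=
  exists B : 'M[R]_(n1, n2),
    [/\ n1 = n2, row_free B & forall x, x \in K -> (r1 x *m B = B *m r2 x)%R].

Definition dsum n1 (r1 : gT -> 'M[R]_n1) n2 (r2 : gT -> 'M[R]_n2) :
    gT -> 'M[R]_(n1 + n2) :=
  fun x => block_mx (r1 x) 0%R 0%R (r2 x).

(* [r1] = [r2] in the Grothendieck group RO(K) of real representations. *)
Definition ro_eq (K : {set gT}) n1 (r1 : gT -> 'M[R]_n1) n2 (r2 : gT -> 'M[R]_n2) :=
  exists m (s : gT -> 'M[R]_m), mx_repr K s /\ rsim K (dsum r1 s) (dsum r2 s).

(* Ind_N^G : RO(N) -> RO(G) is a monomorphism, i.e. has trivial kernel: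
   [Ind V1] - [Ind V2] = 0 implies [V1] - [V2] = 0. *)
Definition ind_mono (G N : {group gT}) : Prop :=
  forall n1 (r1 : gT -> 'M[R]_n1) n2 (r2 : gT -> 'M[R]_n2),
    mx_repr N r1 -> mx_repr N r2 ->
    ro_eq G (ind_mx G N r1) (ind_mx G N r2) -> ro_eq N r1 r2.

End Defs.

From HB Require Import structures.
From mathcomp Require Import all_boot all_order all_algebra all_fingroup all_solvable.
From mathcomp Require Import mxrepresentation zify.
Set Implicit Arguments. Unset Strict Implicit. Unset Printing Implicit Defensive.
Import GRing.Theory Num.Theory.

(* Averaging over H gives |H| dim V^H = sum_(h in H) tr rho(h). The trace of
   Ind_N^G(h) is the sum of the traces of the conjugates h^(t_i^-1) when h is
   in N and 0 otherwise, hence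
     |H| dim W^H = |H :&: N| * sum_i dim V^((H :&: N)^(t_i^-1)),
   and (i), (ii) for W follow from the same conditions for V on these
   conjugate subgroups of N, using |P : P :&: N| <= |H : H :&: N| for P <= H.
   For (iii), if v in V has isotropy (H :&: N)^(t^-1) in N, then the H-average
   of v placed in the t-block of W has isotropy exactly H. *)

Local Open Scope group_scope.

Section GroupClasses.
Variable gT : finGroupType.
Implicit Types (P H K N : {group gT}).

Lemma conjgV_mul (x y : gT) : y * x * y^-1 = x ^ y^-1.
Proof. by rewrite conjgE invgK mulgA. Qed.

Lemma prime_power_groupS P K : K \subset P -> prime_power_group P ->
  prime_power_group K.
Proof. by move=> sKP [p [pp pP]]; exists p; split=> //; apply: pgroupS pP. Qed.

Lemma prime_power_groupJ P x : prime_power_group P ->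
  prime_power_group (P :^ x)%G.
Proof. by case=> p [pp pP]; exists p; rewrite pgroupJ. Qed.

Lemma pseudocyclicS H K : K \subset H -> pseudocyclic H -> pseudocyclic K.
Proof.
move=> sKH [p [pp [Q /and3P[nQH pQ cHQ]]]].
exists p; split=> //; exists (K :&: Q)%G; apply/and3P; split.
- exact: normalGI sKH nQH.
- exact: pgroupS (subsetIr _ _) pQ.
- have nQK : K \subset 'N(Q) := subset_trans sKH (normal_norm nQH).
  have := second_isog nQK; rewrite setIC => /isog_cyclic->.
  exact: cyclicS (quotientS _ sKH) cHQ.
Qed.

Lemma pseudocyclicJ K x : pseudocyclic K -> pseudocyclic (K :^ x)%G.
Proof.
move=> [p [pp [Q /and3P[nQK pQ cKQ]]]].
exists p; split=> //; exists (Q :^ x)%G; apply/and3P; split.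
- by rewrite normalJ.
- by rewrite pgroupJ.
- have := morphim_cyclic (quotm_morphism (conjgm_morphism K x) nQK) cKQ.
  by rewrite morphim_quotm !morphim_conj setIid (setIidPr (normal_sub nQK)).
Qed.

(* |P : P :&: N| = |PN : N| <= |H : N|. *)
Lemma leq_card_indexI N P H : P \subset H -> H \subset 'N(N) ->
  (#|P| * #|H :&: N| <= #|H| * #|P :&: N|)%N.
Proof.
move=> sPH nNH.
have le_index : (#|P : N| <= #|H : N|)%N.
  by rewrite -!card_quotient ?(subset_trans sPH) // subset_leq_card ?quotientS.
rewrite -(Lagrange (subsetIl P N)) -(Lagrange (subsetIl H N)) !indexgI /=.
by rewrite mulnAC [leqRHS]mulnC mulnA leq_mul.
Qed.

End GroupClasses.

Lemma mxtrace_idem (F : fieldType) n (e : 'M[F]_n) :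
  (e *m e = e -> \tr e = (\rank e)%:R)%R.
Proof.
move=> ee; have eCD := mulmx_base e.
set C := col_base e in eCD; set D := row_base e in eCD.
have fD : row_free D := row_base_free e.
have fC : row_full C := col_base_full e.
clearbody C D.
have DC : (D *m C = 1%:M)%R.
  apply: (row_free_inj fD); rewrite mul1mx; apply: (row_full_inj fC).
  by rewrite !mulmxA eCD -mulmxA eCD ee.
by rewrite -{1}eCD mxtrace_mulC DC mxtrace1.
Qed.

Lemma mx_repr_subset (F : fieldType) (gT : finGroupType) (G H : {set gT}) n
    (r : gT -> 'M[F]_n) :
  H \subset G -> mx_repr G r -> mx_repr H r.
Proof.
by move=> /subsetP sHG [r1 rM]; split=> // x y Hx Hy; apply: rM; apply: sHG.
Qed.

Section FixedPoints.
Variables (R : rcfType) (gT : finGroupType) (n : nat) (rho : gT -> 'M[R]_n).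
Local Open Scope ring_scope.

Lemma fixmxP m (A : 'M[R]_(m, n)) (H : {set gT}) :
  reflect (forall x, x \in H -> A *m rho x = A) (A <= fixmx rho H)%MS.
Proof.
apply: (iffP sub_bigcapmxP) => [fixA x Hx | fixA x Hx].
  by have := fixA x Hx; rewrite sub_kermx mulmxBr mulmx1 subr_eq0 => /eqP.
by rewrite sub_kermx mulmxBr mulmx1 fixA ?subrr.
Qed.

(* The average e of rho over H is an idempotent with row space V^H. *)
Lemma card_fixdim (H : {group gT}) : mx_repr H rho ->
  ((#|H| * fixdim rho H)%N%:R : R) = \sum_(h in H) \tr (rho h).
Proof.
move=> rH.
have nzH : (#|H|%:R : R) != 0 by rewrite pnatr_eq0 -lt0n cardG_gt0.
pose S := \sum_(h in H) rho h; pose e := (#|H|%:R)^-1 *: S.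
have averageE (A : 'M[R]_n) : (forall h, h \in H -> A *m rho h = A) ->
    A *m e = A.
  move=> fixA; rewrite /e -scalemxAr /S mulmx_sumr (eq_bigr (fun _ => A)) //.
  by rewrite sumr_const -scaler_nat scalerA mulVf // scale1r.
have fix_e x : x \in H -> e *m rho x = e.
  move=> Hx; rewrite -scalemxAl; congr (_ *: _).
  rewrite /S mulmx_suml [RHS](reindex_astabs 'R x) ?astabsR //=.
  by apply: eq_bigr => h Hh; rewrite (proj2 rH).
have rank_e : \rank e = fixdim rho H.
  apply/eqP; rewrite eqn_leq !mxrankS //; last exact/fixmxP.
  have fixV : forall h, h \in H -> fixmx rho H *m rho h = fixmx rho H.
    exact/fixmxP.
  by rewrite -(averageE _ fixV) submxMl.
rewrite natrM -rank_e -mxtrace_idem ?averageE // /e mxtraceZ mulrA mulfV //.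
by rewrite mul1r raddf_sum.
Qed.

Lemma isotropy_nonzero (K N : {set gT}) : (0 < fixdim rho K)%N ->
  isotropy N rho K ->
  exists2 v : 'rV[R]_n, v != 0 & K = [set g in N | v *m rho g == v].
Proof.
move=> fixK [v0 defK]; have [v00 | ] := eqVneq v0 0; last by exists v0.
have KN : K = N.
  by rewrite defK v00; apply/setP => g; rewrite !inE mul0mx eqxx andbT.
have [r nz_r] : exists r, row r (fixmx rho K) != 0.
  apply/existsP; move: fixK; apply: contraTT => /existsPn zeroF.
  rewrite -eqn0Ngt mxrank_eq0; apply/eqP/row_matrixP => r.
  by rewrite row0; apply/eqP/negbNE/zeroF.
exists (row r (fixmx rho K)) => //; apply/setP => g; rewrite inE -KN.
apply/idP/andP=> [Kg | [//]]; split=> //.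
by apply/eqP/(fixmxP _ _ (row_sub _ _)).
Qed.

End FixedPoints.

Section Induced.
Variables (R : rcfType) (gT : finGroupType) (G N : {group gT}).
Hypothesis nsNG : N <| G.
Variables (n : nat) (rho : gT -> 'M[R]_n).
Hypothesis rhoN : mx_repr N rho.
Local Notation m := #|G : N|.
Local Notation t := (rtrans G N).
Local Notation I := (ind_mx G N rho).

Let X := transversal (rcosets N G) G.
Let trX : is_transversal X (rcosets N G) G :=
  transversalP (rcosets_partition (normal_sub nsNG)).

Let size_enumX : size (enum X) = m.
Proof. by rewrite -cardE (card_transversal trX). Qed.

Let rtrans_mem (i : 'I_m) : t i \in X.
Proof. by rewrite -mem_enum /rtrans mem_nth // size_enumX. Qed.

Lemma rtrans_in (i : 'I_m) : t i \in G.
Proof. exact: subsetP (transversal_sub trX) _ (rtrans_mem i). Qed.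

Lemma rtrans_normJ (i : 'I_m) : (t i)^-1 \in 'N(N).
Proof. by rewrite (subsetP (normal_norm nsNG)) ?groupV ?rtrans_in. Qed.

Lemma rtrans_rcoset x : x \in G ->
  exists j : 'I_m, forall k : 'I_m, (x * (t k)^-1 \in N) = (k == j).
Proof.
move=> Gx; have Nx_coset : N :* x \in rcosets N G.
  by rewrite mem_rcosets mulSGid ?normal_sub.
have XNx := setI_transversal_pblock trX 1 Nx_coset.
set r := transversal_repr 1 X (N :* x) in XNx.
have /setIP[Xr Nx_r] : r \in X :&: N :* x by rewrite XNx set11.
have ir : index r (enum X) < m by rewrite -size_enumX index_mem mem_enum.
have t_ir : t (Ordinal ir) = r by rewrite /rtrans /= nth_index ?mem_enum.
exists (Ordinal ir) => k; rewrite -mem_rcoset.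
apply/idP/eqP => [Nx_tk | ->]; last first.
  by rewrite t_ir (rcoset_eqP Nx_r) rcoset_refl.
have : t k \in X :&: N :* x.
  by rewrite inE rtrans_mem (rcoset_eqP Nx_tk) rcoset_refl.
rewrite XNx => /set1P tk_r.
have : t k = t (Ordinal ir) by rewrite t_ir.
rewrite /rtrans => tk_tj; apply: val_inj => /=; apply/eqP.
by rewrite -(nth_uniq 1 _ _ (enum_uniq (mem X))) ?size_enumX ?tk_tj.
Qed.

Lemma rtrans_mulVN (i j : 'I_m) : (t i * (t j)^-1 \in N) = (i == j).
Proof.
have [j0 coset_j0] := rtrans_rcoset (rtrans_in i).
rewrite coset_j0; have /eqP <- : i == j0 by rewrite -coset_j0 mulgV group1.
exact: eq_sym.
Qed.

Lemma ind_mx_repr : mx_repr G I.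
Proof.
split.
  rewrite /ind_mx -[(1%:M)%R](@mxdiagZ _ _ (fun _ => n) 1%R) /mxdiag.
  apply/eq_mxblockP => i j; rewrite /= conform_mx_id mulg1.
  by rewrite rtrans_mulVN; case: eqP => // ->; rewrite mulgV (proj1 rhoN).
move=> x y Gx Gy; rewrite /ind_mx mul_mxblock; apply/eq_mxblockP => i k /=.
have [j0 coset_j0] := rtrans_rcoset (groupM (rtrans_in i) Gx).
rewrite (bigD1 j0) //= big1 ?addr0; last first.
  by move=> j /negbTE nj; rewrite coset_j0 nj mul0mx.
have Nx' : t i * x * (t j0)^-1 \in N by rewrite coset_j0.
have -> : t i * (x * y) * (t k)^-1 =
    (t i * x * (t j0)^-1) * (t j0 * y * (t k)^-1) by rewrite !mulgA mulgKV.
rewrite coset_j0 eqxx groupMl //.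
by case: ifP => Ny'; rewrite ?mulmx0 // (proj2 rhoN).
Qed.

Lemma mxtrace_ind_mx h : h \in G ->
  (\tr (I h) = \sum_(i < m) if h \in N then \tr (rho (h ^ (t i)^-1)) else 0)%R.
Proof.
move=> Gh; rewrite /ind_mx mxtrace_mxblock; apply: eq_bigr => i _ /=.
rewrite conjgV_mul memJ_norm ?rtrans_normJ //.
by case: ifP; rewrite ?mxtrace0.
Qed.

Lemma ind_mxN a : a \in N -> I a = (\mxdiag_i rho (a ^ (t i)^-1))%R.
Proof.
move=> Na; rewrite /ind_mx /mxdiag; apply/eq_mxblockP => i j /=.
have -> : t i * a * (t j)^-1 = a ^ (t i)^-1 * (t i * (t j)^-1).
  by rewrite -conjgV_mul !mulgA mulgKV.
rewrite groupMl ?memJ_norm ?rtrans_normJ // rtrans_mulVN.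
by case: eqP => [<- | _]; rewrite ?mulgV ?mulg1 ?conform_mx_id.
Qed.

Lemma conjI_sub_rtrans (K : {set gT}) (i : 'I_m) :
  (K :&: N) :^ (t i)^-1 \subset N.
Proof.
apply/subsetP => y /imsetP[z /setIP[_ Nz] ->].
by rewrite memJ_norm ?rtrans_normJ.
Qed.

Local Notation fixsum K := (\sum_(i < m) fixdim rho ((K :&: N) :^ (t i)^-1)).

Lemma card_fixdim_ind (H : {group gT}) : H \subset G ->
  (#|H| * fixdim I H = #|H :&: N| * fixsum H)%N.
Proof.
move=> sHG; apply/eqP; rewrite -(eqr_nat R).
rewrite (card_fixdim (mx_repr_subset sHG ind_mx_repr)).
rewrite (eq_bigr _ (fun h Hh => mxtrace_ind_mx (subsetP sHG h Hh))).
rewrite exchange_big.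
rewrite big_distrr natr_sum; apply/eqP/eq_bigr => i _ /=.
set s := (t i)^-1; have sHNs_N := conjI_sub_rtrans H i.
rewrite -(cardJg _ s) -[(H :&: N) :^ s]/(gval ((H :&: N) :^ s)%G).
rewrite (card_fixdim (mx_repr_subset sHNs_N rhoN)) /=.
rewrite -big_mkcondr /= /conjugate big_imset /=; last first.
  by move=> a b _ _; apply: conjg_inj.
by apply: eq_bigl => h; rewrite inE.
Qed.

Lemma leq_fixdim_ind c (K : {group gT}) : K \subset G ->
  (forall i : 'I_m, c <= fixdim rho ((K :&: N) :^ (t i)^-1))%N ->
  (c <= fixdim I K)%N.
Proof.
move=> sKG le_c.
have le_K : (#|K| <= m * #|K :&: N|)%N.
  have := leq_card_indexI sKG (normal_norm nsNG).
  rewrite (setIidPr (normal_sub nsNG)) -(Lagrange (normal_sub nsNG)).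
  by rewrite mulnC -mulnA leq_pmul2l.
have sum_ge : (\sum_(i < m) c <= fixsum K)%N by apply: leq_sum.
rewrite sum_nat_const card_ord in sum_ge.
rewrite -(leq_pmul2l (cardG_gt0 K)) card_fixdim_ind //.
apply: leq_trans (leq_mul le_K (leqnn c)) _.
by rewrite mulnAC mulnC leq_mul2l sum_ge orbT.
Qed.

Lemma cond_ii_ind : cond_ii N rho -> cond_ii G I.
Proof.
move=> [fix5 fix2]; split=> [P sPG ppP | H sHG pcH];
  apply: leq_fixdim_ind => // i.
  apply: fix5; first exact: conjI_sub_rtrans.
  exact/prime_power_groupJ/(prime_power_groupS (subsetIl P N)).
apply: fix2; first exact: conjI_sub_rtrans.
exact/pseudocyclicJ/(pseudocyclicS (subsetIl H N)).
Qed.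

Lemma cond_i_ind : cond_i N rho -> cond_i G I.
Proof.
move=> gapN P H sPG ppP ltPH sHG; have sPH := proper_sub ltPH.
have fixP := card_fixdim_ind sPG; have fixH := card_fixdim_ind sHG.
have [eqPNHN | ltPNHN] := eqVproper (setSI N sPH).
  have idx2 : (2 * #|P| <= #|H|)%N.
    rewrite -(Lagrange sPH) mulnC leq_mul2l indexg_gt1.
    by rewrite (proper_subn ltPH) orbT.
  rewrite eqPNHN -fixH in fixP.
  rewrite -(leq_pmul2l (cardG_gt0 P)) fixP mulnA [(_ * 2)%N]mulnC.
  by rewrite leq_mul2r idx2 orbT.
have sum_le : (2 * fixsum H <= fixsum P)%N.
  rewrite big_distrr leq_sum // => i _; apply: gapN.
  - exact: conjI_sub_rtrans.
  - exact/prime_power_groupJ/(prime_power_groupS (subsetIl P N)).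
  - by rewrite properJ.
  - exact: conjI_sub_rtrans.
have idx := leq_card_indexI sPH (subset_trans sHG (normal_norm nsNG)).
have HPN_gt0 : (0 < #|H| * #|P :&: N|)%N by rewrite muln_gt0 !cardG_gt0.
rewrite -(leq_pmul2l HPN_gt0).
have := leq_mul (leqnn (#|P :&: N| * #|H :&: N|)) sum_le.
have := leq_mul idx (leqnn (fixdim I P)).
nia.
Qed.

Lemma submxrow_mul_ind_mxN (w : 'rV[R]_(\sum_(i < m) n)) a j : a \in N ->
  (submxrow (w *m I a) j = submxrow w j *m rho (a ^ (t j)^-1))%R.
Proof.
by move=> Na; rewrite ind_mxN // -[w]submxrowK mul_mxrow_mxdiag !mxrowK.
Qed.

Definition ind_vec (i : 'I_m) (v : 'rV[R]_n) : 'rV[R]_(\sum_(k < m) n) :=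
  (\mxrow_k (if k == i then v else 0))%R.

Lemma submxrow_ind_vec_mul i v x :
  (submxrow (ind_vec i v *m I x) i =
   if x \in N then v *m rho (x ^ (t i)^-1) else 0)%R.
Proof.
rewrite /ind_vec /ind_mx mul_mxrow_mxblock mxrowK (bigD1 i) //= big1 ?addr0.
  rewrite eqxx conjgV_mul memJ_norm ?rtrans_normJ //.
  by case: ifP; rewrite ?mulmx0.
by move=> k /negbTE ->; rewrite mul0mx.
Qed.

(* The i-th block of the H-average w is #|H :&: N| *: v; if w *m I g = w,
   this block forces h g in N for some h in H, and then h g fixes v in the
   i-th block, so h g is in H :&: N. *)
Lemma isotropy_ind (H : {group gT}) (i : 'I_m) (v : 'rV[R]_n) :
  H \subset G -> v != 0%R ->
  (H :&: N) :^ (t i)^-1 = [set a in N | (v *m rho a)%R == v] ->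
  isotropy G I H.
Proof.
move=> sHG nz_v stab_v; set s := (t i)^-1.
pose w := (\sum_(h in H) ind_vec i v *m I h)%R.
have w_fix h : h \in H -> (w *m I h = w)%R.
  move=> Hh; rewrite /w mulmx_suml [RHS](reindex_astabs 'R h) ?astabsR //=.
  by apply: eq_bigr => x Hx; rewrite -mulmxA (proj2 ind_mx_repr) ?(subsetP sHG).
have v_fix a : a \in H :&: N -> (v *m rho (a ^ s) = v)%R.
  move=> HNa; have := memJ_conjg (H :&: N) s a.
  by rewrite HNa stab_v inE => /andP[_ /eqP].
have HN_neq0 : (#|H :&: N|%:R != 0 :> R)%R by rewrite pnatr_eq0 -lt0n cardG_gt0.
have w_block : (submxrow w i = #|H :&: N|%:R *: v)%R.
  rewrite submxrow_sum (eq_bigr _ (fun h _ => submxrow_ind_vec_mul i v h)).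
  rewrite -big_mkcondr /= -sum1_card natr_sum scaler_suml.
  apply: eq_big => [h | h HNh]; first by rewrite inE.
  by rewrite v_fix ?scale1r // inE.
exists w; apply/setP => g; rewrite inE.
apply/idP/andP => [Hg | [Gg /eqP wg]]; first by rewrite (subsetP sHG) ?w_fix.
have [h Hh Nhg] : exists2 h, h \in H & h * g \in N.
  apply/exists_inP; apply: contraT => /exists_inPn notN.
  have := congr1 (fun M => submxrow M i) wg.
  rewrite /= w_block /w mulmx_suml submxrow_sum big1 => [/esym/eqP | h Hh].
    by rewrite scaler_eq0 (negbTE HN_neq0) (negbTE nz_v).
  rewrite -mulmxA -(proj2 ind_mx_repr h g (subsetP sHG h Hh) Gg).
  by rewrite submxrow_ind_vec_mul (negbTE (notN h Hh)).
have w_fix_hg : (w *m I (h * g) = w)%R.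
  by rewrite (proj2 ind_mx_repr h g (subsetP sHG h Hh) Gg) mulmxA w_fix.
have /eqP : (#|H :&: N|%:R *: (v *m rho ((h * g) ^ s)) = #|H :&: N|%:R *: v)%R.
  by rewrite scalemxAl -w_block -submxrow_mul_ind_mxN // w_fix_hg.
rewrite (inj_eq (scalerI HN_neq0)) => /eqP fix_hg.
have : (h * g) ^ s \in (H :&: N) :^ s.
  by rewrite stab_v inE memJ_norm ?rtrans_normJ // Nhg fix_hg eqxx.
by rewrite memJ_conjg => /setIP[Hhg _]; rewrite -(groupMl _ Hh).
Qed.

Lemma cond_iii_ind : cond_ii N rho -> cond_iii N rho -> cond_iii G I.
Proof.
move=> [_ fix2] isoN H sHG pcH.
pose i0 : 'I_m := Ordinal (indexg_gt0 G N).
set K := ((H :&: N) :^ (t i0)^-1)%G.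
have sKN : K \subset N := conjI_sub_rtrans H i0.
have pcK : pseudocyclic K := pseudocyclicJ _ (pseudocyclicS (subsetIl H N) pcH).
have [v nz_v stab_v] :=
  isotropy_nonzero (ltnW (fix2 K sKN pcK)) (isoN K sKN pcK).
exact: isotropy_ind sHG nz_v stab_v.
Qed.

End Induced.

Theorem mainTheorem7 (R : rcfType) (gT : finGroupType) (G N : {group gT})
  (n : nat) (rho : gT -> 'M[R]_n) :
  oliver_group G -> (N <| G)%g -> ind_mono R G N ->
  mx_repr N rho ->
  cond_i N rho -> cond_ii N rho -> cond_iii N rho ->
  cond_i G (ind_mx G N rho) /\ cond_ii G (ind_mx G N rho) /\
  cond_iii G (ind_mx G N rho).
Proof.
move=> _ nsNG _ rhoN gapN fixN isoN.
split; first exact: cond_i_ind.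
by split; [exact: cond_ii_ind | exact: cond_iii_ind].
Qed.
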